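(* Let $V$ be a JB-algebra and let $a,b$ be projections in $V$ with $\{aba\}=\lambda a$ and $\{bab\}=\mu b$ for some real numbers $\lambda,\mu$. Then $0\le\lambda=\mu\le1$. Moreover $\lambda=0$ if and only if $ab=0$, and $\lambda=1$ if and only if $a=b$.
   Context: Products are the Jordan product of $V$. A projection is an idempotent. The triple product is $\{xyz\}=(xy)z-(zx)y+(yz)x$, so that $\{aba\}=2a(ab)-a^2b$. *)

From HB Require Import structures.
From mathcomp Require Import all_boot all_order all_algebra.
From mathcomp Require Import all_classical all_reals all_analysis.
Set Implicit Arguments. Unset Strict Implicit. Unset Printing Implicit Defensive.
Import Order.TTheory GRing.Theory Num.Theory.
Import numFieldNormedType.Exports.
Local Open Scope ring_scope.

Definition is_JB_algebra (R : realType) (V : completeNormedModType R)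
    (mul : V -> V -> V) : Prop :=
  (* bilinearity (left linearity + commutativity gives bilinearity) *)
  (forall (c : R) (x y z : V), mul (c *: x + y) z = c *: mul x z + mul y z) /\
  (forall x y : V, mul x y = mul y x) /\
  (forall x y : V, mul (mul x y) (mul x x) = mul x (mul y (mul x x))) /\
  (forall x y : V, `|mul x y| <= `|x| * `|y|) /\
  (forall x : V, `|mul x x| = `|x| ^+ 2) /\
  (forall x y : V, `|mul x x| <= `|mul x x + mul y y|).

Definition triple (R : realType) (V : completeNormedModType R)
    (mul : V -> V -> V) (x y z : V) : V :=
  mul (mul x y) z - mul (mul z x) y + mul (mul y z) x.

Definition is_projection (R : realType) (V : completeNormedModType R)
    (mul : V -> V -> V) (p : V) : Prop := mul p p = p.

From HB Require Import structures.
From mathcomp Require Import all_boot all_order all_algebra.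
From mathcomp Require Import all_classical all_reals all_analysis.
From mathcomp Require Import ring.
Import Order.TTheory GRing.Theory Num.Theory.
Import numFieldNormedType.Exports.
Local Open Scope ring_scope.
Set Implicit Arguments. Unset Strict Implicit.

(* Write p = ab and d = a - b. For a projection a, {aba} = 2a(ab) - ab, so the
   hypotheses say a p = (λa + p)/2 and b p = (μb + p)/2. The Jordan identity
   for x = a + b, y = b then gives 4p² = λa + μb + 2μp; comparing with the same
   identity for a and b swapped forces λ = μ (if p = 0, both vanish). One then
   computes d² = a + b - 2p, (d²)² = (1 - λ)d² and (2(p - λa))² = λd².
   In a JB-algebra u² + v² = 0 forces u = 0, so λ < 0 (with u = √(-λ) d,
   v = 2(p - λa)) or λ > 1 (with u = d², v = √(λ - 1) d) would give d = 0,
   i.e. a = b, whence λ = 1. Likewise λ = 1 gives (d²)² = 0, so a = b, and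
   λ = 0 gives p² = 0, so p = 0. *)

Lemma scalerIl (R : fieldType) (V : lmodType R) (v : V) :
  v != 0 -> injective ( *:%R^~ v : R -> V).
Proof.
move=> v0 c d /eqP; rewrite -subr_eq0 -scalerBl scaler_eq0 (negbTE v0) orbF.
by rewrite subr_eq0 => /eqP.
Qed.

Section LinearCombination.
Variables (R : comPzRingType) (V : lmodType R) (u1 u2 u3 u4 : V).

Definition lcomb4 (c1 c2 c3 c4 : R) : V :=
  c1 *: u1 + c2 *: u2 + c3 *: u3 + c4 *: u4.

Lemma lcomb4_0 : 0 = lcomb4 0 0 0 0.
Proof. by rewrite /lcomb4 !scale0r !addr0. Qed.

Lemma lcomb4_e1 : u1 = lcomb4 1 0 0 0.
Proof. by rewrite /lcomb4 scale1r !scale0r !addr0. Qed.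

Lemma lcomb4_e2 : u2 = lcomb4 0 1 0 0.
Proof. by rewrite /lcomb4 scale1r !scale0r !addr0 add0r. Qed.

Lemma lcomb4_e3 : u3 = lcomb4 0 0 1 0.
Proof. by rewrite /lcomb4 scale1r !scale0r addr0 !add0r. Qed.

Lemma lcomb4_e4 : u4 = lcomb4 0 0 0 1.
Proof. by rewrite /lcomb4 scale1r !scale0r !add0r. Qed.

Lemma lcomb4D x1 x2 x3 x4 y1 y2 y3 y4 :
  lcomb4 x1 x2 x3 x4 + lcomb4 y1 y2 y3 y4 =
  lcomb4 (x1 + y1) (x2 + y2) (x3 + y3) (x4 + y4).
Proof.
rewrite /lcomb4 !scalerDl addrACA; congr (_ + _).
by rewrite addrACA; congr (_ + _); rewrite addrACA.
Qed.

Lemma lcomb4Z r x1 x2 x3 x4 :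
  r *: lcomb4 x1 x2 x3 x4 = lcomb4 (r * x1) (r * x2) (r * x3) (r * x4).
Proof. by rewrite /lcomb4 !scalerDr !scalerA. Qed.

Lemma lcomb4N x1 x2 x3 x4 :
  - lcomb4 x1 x2 x3 x4 = lcomb4 (- x1) (- x2) (- x3) (- x4).
Proof. by rewrite -scaleN1r lcomb4Z !mulN1r. Qed.

Lemma lcomb4_solve k x1 x2 x3 x4 y1 y2 y3 y4 g1 g2 g3 g4 h1 h2 h3 h4 :
    lcomb4 x1 x2 x3 x4 = lcomb4 y1 y2 y3 y4 ->
    g1 - h1 = k * (x1 - y1) -> g2 - h2 = k * (x2 - y2) ->
    g3 - h3 = k * (x3 - y3) -> g4 - h4 = k * (x4 - y4) ->
  lcomb4 g1 g2 g3 g4 = lcomb4 h1 h2 h3 h4.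
Proof.
move=> Exy e1 e2 e3 e4; apply/eqP; rewrite -subr_eq0 lcomb4N lcomb4D.
by rewrite e1 e2 e3 e4 -lcomb4Z -lcomb4D -lcomb4N Exy subrr scaler0.
Qed.

End LinearCombination.

Ltac lcomb_close L E k :=
  rewrite /L ?(lcomb4D, lcomb4N, lcomb4Z) in E *;
  lazymatch goal with
  | |- @lcomb4 ?R _ _ _ _ _ _ _ _ _ = _ =>
    let kR := constr:((k : R)) in apply: (lcomb4_solve (k := kR) E)
  end; field; by rewrite ?pnatr_eq0.

(* [lcomb4_solve_with u1 u2 u3 u4 H k] proves an equation between linear
   combinations of the [ui] whose difference is [k] times that of [H]. The
   [ui] are abstracted from [u4] down to [u1], so a [ui] may occur inside a
   [uj] only when [i < j]. *)
Ltac lcomb4_solve_with u1 u2 u3 u4 H k :=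
  let L := fresh "L" in let E := fresh "E" in
  pose L := lcomb4 u1 u2 u3 u4; have E := H;
  rewrite ?(lcomb4_e4 u1 u2 u3 u4 : u4 = L 0 0 0 1)
          ?(lcomb4_e3 u1 u2 u3 u4 : u3 = L 0 0 1 0)
          ?(lcomb4_e2 u1 u2 u3 u4 : u2 = L 0 1 0 0)
          ?(lcomb4_e1 u1 u2 u3 u4 : u1 = L 1 0 0 0)
          ?(lcomb4_0 u1 u2 u3 u4 : 0 = L 0 0 0 0) in E *;
  lcomb_close L E k.

Ltac lcomb3_solve_with u1 u2 u3 H k :=
  let L := fresh "L" in let E := fresh "E" in
  pose L := lcomb4 u1 u2 u3 0; have E := H;
  rewrite ?(lcomb4_e3 u1 u2 u3 0 : u3 = L 0 0 1 0)
          ?(lcomb4_e2 u1 u2 u3 0 : u2 = L 0 1 0 0)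
          ?(lcomb4_e1 u1 u2 u3 0 : u1 = L 1 0 0 0)
          ?(lcomb4_0 u1 u2 u3 0 : 0 = L 0 0 0 0) in E *;
  lcomb_close L E k.

Ltac lcomb3_eq u1 u2 u3 := lcomb3_solve_with u1 u2 u3 (erefl u1) uconstr:(0%R).

Section JordanAlgebra.
Variables (R : numFieldType) (V : lmodType R) (mul : V -> V -> V).
Local Notation "x ⋅ y" := (mul x y) (at level 40, left associativity).
Hypothesis mulZDl : forall c x y z, (c *: x + y) ⋅ z = c *: (x ⋅ z) + y ⋅ z.
Hypothesis mulC : commutative mul.
Hypothesis jordan : forall x y, x ⋅ y ⋅ (x ⋅ x) = x ⋅ (y ⋅ (x ⋅ x)).

Lemma mulDl x y z : (x + y) ⋅ z = x ⋅ z + y ⋅ z.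
Proof. by have := mulZDl 1 x y z; rewrite !scale1r. Qed.

Lemma mul0l x : 0 ⋅ x = 0.
Proof. by apply: (@addrI _ (0 ⋅ x)); rewrite -mulDl !addr0. Qed.

Lemma mulZl c x y : (c *: x) ⋅ y = c *: (x ⋅ y).
Proof. by have := mulZDl c x 0 y; rewrite !addr0 mul0l addr0. Qed.

Lemma mulNl x y : (- x) ⋅ y = - (x ⋅ y).
Proof. by rewrite -scaleN1r mulZl scaleN1r. Qed.

Lemma mulDr x y z : x ⋅ (y + z) = x ⋅ y + x ⋅ z.
Proof. by rewrite !(mulC x) mulDl. Qed.

Lemma mul0r x : x ⋅ 0 = 0.
Proof. by rewrite mulC mul0l. Qed.

Lemma mulZr c x y : x ⋅ (c *: y) = c *: (x ⋅ y).
Proof. by rewrite !(mulC x) mulZl. Qed.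

Lemma mulNr x y : x ⋅ (- y) = - (x ⋅ y).
Proof. by rewrite !(mulC x) mulNl. Qed.

Lemma sqrZ c x : (c *: x) ⋅ (c *: x) = c ^+ 2 *: (x ⋅ x).
Proof. by rewrite mulZl mulZr scalerA. Qed.

Lemma coef1_of_proj_eq a lam : a ⋅ a = a -> a != 0 ->
  a ⋅ (a ⋅ a) = 2^-1 *: (lam *: a + a ⋅ a) -> lam = 1.
Proof.
move=> ha a0; rewrite !ha => E; apply: (scalerIl a0); rewrite scale1r.
have : a + a = lam *: a + a.
  by rewrite -mulr2n -scaler_nat {1}E scalerA mulfV ?scale1r ?pnatr_eq0.
by move/addIr/esym.
Qed.

Lemma coef_eq0_of_orthogonal a b lam : a != 0 ->
  a ⋅ (a ⋅ b) = 2^-1 *: (lam *: a + a ⋅ b) -> a ⋅ b = 0 -> lam = 0.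
Proof.
move=> a0 hab ab0; apply/eqP; move: hab.
rewrite ab0 mul0r addr0 scalerA => /esym/eqP.
by rewrite scaler_eq0 (negbTE a0) orbF mulf_eq0 invr_eq0 pnatr_eq0.
Qed.

Section TwoProjections.
Variables (a b : V) (lam mu : R).
Hypotheses (ha : a ⋅ a = a) (hb : b ⋅ b = b).
Hypothesis hab : a ⋅ (a ⋅ b) = 2^-1 *: (lam *: a + a ⋅ b).
Hypothesis hba : b ⋅ (b ⋅ a) = 2^-1 *: (mu *: b + b ⋅ a).
Local Notation p := (a ⋅ b).

Let hbp : b ⋅ p = 2^-1 *: (mu *: b + p).
Proof. by rewrite (mulC a b). Qed.

Let mulE := (ha, hb, mulC b a, mulC p a, mulC p b, hab, hbp).

Lemma sqr_mul_proj : p ⋅ p = 4^-1 *: (lam *: a + mu *: b + (2 * mu) *: p).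
Proof.
have J := jordan (a + b) b.
rewrite !(mulDl, mulDr, mulZl, mulZr, mulNl, mulNr, mulE) in J.
lcomb4_solve_with a b (a ⋅ b) (p ⋅ p) J (2^-1 : R).
Qed.

End TwoProjections.

Lemma proj_coef_eq a b lam mu : a ⋅ a = a -> b ⋅ b = b -> a != 0 -> b != 0 ->
    a ⋅ (a ⋅ b) = 2^-1 *: (lam *: a + a ⋅ b) ->
    b ⋅ (b ⋅ a) = 2^-1 *: (mu *: b + b ⋅ a) ->
  lam = mu.
Proof.
move=> ha hb a0 b0 hab hba.
have := sqr_mul_proj hb ha hba hab; rewrite (mulC b a) (sqr_mul_proj ha hb hab hba).
move=> E; have : (mu - lam) *: (a ⋅ b) = 0 by lcomb3_solve_with a b (a ⋅ b) E (2 : R).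
move/eqP; rewrite scaler_eq0 subr_eq0 => /orP[/eqP // | /eqP ab0].
have ba0 : b ⋅ a = 0 by rewrite mulC.
by rewrite (coef_eq0_of_orthogonal a0 hab ab0) (coef_eq0_of_orthogonal b0 hba ba0).
Qed.

Section BalancedProjections.
Variables (a b : V) (lam : R).
Hypotheses (ha : a ⋅ a = a) (hb : b ⋅ b = b).
Hypothesis hab : a ⋅ (a ⋅ b) = 2^-1 *: (lam *: a + a ⋅ b).
Hypothesis hba : b ⋅ (b ⋅ a) = 2^-1 *: (lam *: b + b ⋅ a).
Local Notation p := (a ⋅ b).

Let hbp : b ⋅ p = 2^-1 *: (lam *: b + p).
Proof. by rewrite (mulC a b). Qed.

Let mulE := (ha, hb, mulC b a, mulC p a, mulC p b, hab, hbp,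
             sqr_mul_proj ha hb hab hba).

Lemma sqr_sub_proj : (a - b) ⋅ (a - b) = a + b - 2 *: p.
Proof. rewrite !(mulDl, mulDr, mulNl, mulNr, mulE); lcomb3_eq a b (a ⋅ b). Qed.

Lemma sqr_sqr_sub_proj :
  (a - b) ⋅ (a - b) ⋅ ((a - b) ⋅ (a - b)) = (1 - lam) *: ((a - b) ⋅ (a - b)).
Proof.
rewrite sqr_sub_proj !(mulDl, mulDr, mulNl, mulNr, mulZl, mulZr, mulE).
lcomb3_eq a b (a ⋅ b).
Qed.

Lemma sqr_mul_sub_scale :
  (2 *: (p - lam *: a)) ⋅ (2 *: (p - lam *: a)) = lam *: ((a - b) ⋅ (a - b)).
Proof.
rewrite sqr_sub_proj !(mulDl, mulDr, mulNl, mulNr, mulZl, mulZr, mulE).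
lcomb3_eq a b (a ⋅ b).
Qed.

End BalancedProjections.

End JordanAlgebra.

Section JBAlgebra.
Variables (R : rcfType) (V : normedModType R) (mul : V -> V -> V).
Local Notation "x ⋅ y" := (mul x y) (at level 40, left associativity).
Hypothesis mulZDl : forall c x y z, (c *: x + y) ⋅ z = c *: (x ⋅ z) + y ⋅ z.
Hypothesis mulC : commutative mul.
Hypothesis jordan : forall x y, x ⋅ y ⋅ (x ⋅ x) = x ⋅ (y ⋅ (x ⋅ x)).
Hypothesis norm_sqr : forall x, `|x ⋅ x| = `|x| ^+ 2.
Hypothesis norm_sqr_le : forall x y, `|x ⋅ x| <= `|x ⋅ x + y ⋅ y|.

Lemma sqr_eq0 x : x ⋅ x = 0 -> x = 0.
Proof.
by move=> xx0; apply/eqP; rewrite -normr_eq0 -sqrf_eq0 -norm_sqr xx0 normr0.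
Qed.

Lemma sqrD_eq0 x y : x ⋅ x + y ⋅ y = 0 -> x = 0.
Proof.
move=> s0; apply: sqr_eq0; apply/eqP; rewrite -normr_le0 -(normr0 V) -s0.
exact: norm_sqr_le.
Qed.

Section BalancedJBProjections.
Variables (a b : V) (lam : R).
Hypotheses (ha : a ⋅ a = a) (hb : b ⋅ b = b) (a0 : a != 0).
Hypothesis hab : a ⋅ (a ⋅ b) = 2^-1 *: (lam *: a + a ⋅ b).
Hypothesis hba : b ⋅ (b ⋅ a) = 2^-1 *: (lam *: b + b ⋅ a).

Lemma coef_eq1 : lam = 1 <-> a = b.
Proof.
split=> [lam1 | eab]; last by have := hab; rewrite -eab; exact: coef1_of_proj_eq ha a0.
apply/eqP; rewrite -subr_eq0; apply/eqP; do 2 apply: sqr_eq0.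
by rewrite (sqr_sqr_sub_proj mulZDl mulC jordan ha hb hab hba) lam1 subrr scale0r.
Qed.

Lemma coef_eq0 : lam = 0 <-> a ⋅ b = 0.
Proof.
split=> [lam0 | ]; last exact: coef_eq0_of_orthogonal a0 hab.
apply: sqr_eq0; rewrite (sqr_mul_proj mulZDl mulC jordan ha hb hab hba) lam0.
by rewrite mulr0 !scale0r !addr0 scaler0.
Qed.

Lemma coef_ge0 : 0 <= lam.
Proof.
rewrite leNgt; apply/negP => lam_lt0.
have s2 : Num.sqrt (- lam) ^+ 2 = - lam by rewrite sqr_sqrtr // oppr_ge0 ltW.
have : (Num.sqrt (- lam) *: (a - b)) ⋅ (Num.sqrt (- lam) *: (a - b)) +
       (2 *: (a ⋅ b - lam *: a)) ⋅ (2 *: (a ⋅ b - lam *: a)) = 0.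
  rewrite (sqrZ mulZDl mulC) s2.
  by rewrite (sqr_mul_sub_scale mulZDl mulC jordan ha hb hab hba) scaleNr addNr.
move/sqrD_eq0/eqP; rewrite scaler_eq0 sqrtr_eq0 oppr_le0 leNgt lam_lt0 /=.
by rewrite subr_eq0 => /eqP/coef_eq1 lam1; move: lam_lt0; rewrite lam1 ltr10.
Qed.

Lemma coef_le1 : lam <= 1.
Proof.
rewrite leNgt; apply/negP => lam_gt1.
have s2 : Num.sqrt (lam - 1) ^+ 2 = lam - 1 by rewrite sqr_sqrtr // subr_ge0 ltW.
have : (a - b) ⋅ (a - b) ⋅ ((a - b) ⋅ (a - b)) +
       (Num.sqrt (lam - 1) *: (a - b)) ⋅ (Num.sqrt (lam - 1) *: (a - b)) = 0.
  rewrite (sqr_sqr_sub_proj mulZDl mulC jordan ha hb hab hba) (sqrZ mulZDl mulC) s2.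
  by rewrite -scalerDl addrA subrK subrr scale0r.
move/sqrD_eq0/sqr_eq0/eqP; rewrite subr_eq0 => /eqP/coef_eq1 lam1.
by move: lam_gt1; rewrite lam1 ltxx.
Qed.

End BalancedJBProjections.

End JBAlgebra.

Lemma triple_proj_mulE (R : realType) (V : completeNormedModType R)
    (mul : V -> V -> V) (mulC : commutative mul) (a b : V) (lam : R) :
    mul a a = a -> triple mul a b a = lam *: a ->
  mul a (mul a b) = 2^-1 *: (lam *: a + mul a b).
Proof.
move=> ha; rewrite /triple ha (mulC b a) (mulC (mul a b) a) => hab.
lcomb3_solve_with a (mul a b) (mul a (mul a b)) hab (2^-1 : R).
Qed.

Unset Implicit Arguments.
Theorem proposition3p1 (R : realType) (V : completeNormedModType R)
    (mul : V -> V -> V) (hJB : is_JB_algebra mul)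
    (a b : V) (lam mu : R)
    (ha : is_projection mul a) (hb : is_projection mul b)
    (ha0 : a != 0) (hb0 : b != 0)
    (hab : triple mul a b a = lam *: a) (hba : triple mul b a b = mu *: b) :
  [/\ 0 <= lam, lam = mu, mu <= 1,
      (lam = 0 <-> mul a b = 0) & (lam = 1 <-> a = b)].
Proof.
have [mulZDl [mulC [jordan [_ [norm_sqr norm_sqr_le]]]]] := hJB.
have {}hab := triple_proj_mulE mulC ha hab.
have {}hba := triple_proj_mulE mulC hb hba.
have lam_mu := proj_coef_eq mulZDl mulC jordan ha hb ha0 hb0 hab hba.
subst mu; split=> //.
- exact: (coef_ge0 mulZDl mulC jordan norm_sqr norm_sqr_le ha hb ha0 hab hba).
- exact: (coef_le1 mulZDl mulC jordan norm_sqr norm_sqr_le ha hb ha0 hab hba).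
- exact: (coef_eq0 mulZDl mulC jordan norm_sqr ha hb ha0 hab hba).
- exact: (coef_eq1 mulZDl mulC jordan norm_sqr ha hb ha0 hab hba).
Qed.
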